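(* Let $i\ge2$ be an integer. The map $[0,\pi/2]\ni\alpha\mapsto\mathcal{F}^{[i]}_\alpha$, with values in the space of nonempty compact subsets of $\mathbb{R}^2$ equipped with the Hausdorff metric, is continuous from above at $\alpha=0$. That is, the Hausdorff distance between $\mathcal{F}^{[i]}_\alpha$ and $\mathcal{F}^{[i]}_0$ tends to $0$ as $\alpha\to0^+$.
   Context: For an integer $i\ge2$, the $i$-Fibonacci words over $\{0,1\}$ are defined by $f^{[i]}_1=0$, $f^{[i]}_2=0^{i-1}1$ (where $0^{i-1}$ denotes $i-1$ zeros), and $f^{[i]}_n=f^{[i]}_{n-1}f^{[i]}_{n-2}$ for $n\ge3$. Drawing rule with drawing angle $\alpha$: given a word $a_1\cdots a_N$, start at the origin with current direction $\theta=\pi/2$. For $j=1,\dots,N$, first draw a unit segment from the current point in direction $\theta$ and move the current point to its endpoint. Then update the direction: if $a_j=0$ and $j$ is even, $\theta\mapsto\theta+\alpha$; if $a_j=0$ and $j$ is odd, $\theta\mapsto\theta-\alpha$; if $a_j=1$, $\theta$ is unchanged. $\mathcal{F}^{[i]}_n$ is the union of the segments drawn for $f^{[i]}_n$, and $w^{[i]}_n$ is the distance between its first vertex (the origin) and its last vertex. Let $m(k)=6k+5$ if $i$ is even and $m(k)=6k+3$ if $i$ is odd. For $\alpha\in(0,\pi/2]$, the Fibonacci fractal $\mathcal{F}^{[i]}_\alpha$ is the limit, in the Hausdorff metric, of $\frac{\sqrt2}{w^{[i]}_{m(k)}}\mathcal{F}^{[i]}_{m(k)}$ (dilation about the origin)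 as $k\to\infty$; this limit exists. For $\alpha=0$ all curves are vertical segments starting at the origin, and $\mathcal{F}^{[i]}_0$ is the segment from $(0,0)$ to $(0,\sqrt2)$. The Hausdorff metric between nonempty compact sets $U,V\subset\mathbb{R}^2$ is the standard one, $\max\{\sup_{x\in U}\operatorname{dist}(x,V),\sup_{y\in V}\operatorname{dist}(y,U)\}$ (or an equivalent variant). *)

From Stdlib Require Import Reals Lra Lia List Arith.
Import ListNotations.
Open Scope R_scope.

Definition pt := (R * R)%type.

Definition dist2 (x y : pt) : R :=
  sqrt ((fst x - fst y) ^ 2 + (snd x - snd y) ^ 2).

(* i-Fibonacci words over {0,1} (letters encoded as nat 0 / 1).
   fibpair i n = (f_{n+1}, f_{n+2}). *)
Fixpoint fibpair (i : nat) (n : nat) : list nat * list nat :=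
  match n with
  | O => ([0%nat], repeat 0%nat (i - 1) ++ [1%nat])
  | S n' => let (a, b) := fibpair i n' in (b, b ++ a)
  end.

(* fib_word i n = f^{[i]}_n for n >= 1 (f^{[i]}_0 is irrelevant, set to f_1). *)
Definition fib_word (i n : nat) : list nat := fst (fibpair i (n - 1)).

(* Drawing rule: vertices of the curve. [draw_aux alpha w j p th] draws the
   word w whose first letter has (1-based) index j, from the current point p
   with current direction th. *)
Fixpoint draw_aux (alpha : R) (w : list nat) (j : nat) (p : pt) (th : R)
  : list pt :=
  match w with
  | [] => [p]
  | a :: w' =>
      let q := (fst p + cos th, snd p + sin th) in
      let th' := if Nat.eqb a 0
                 then (if Nat.even j then th + alpha else th - alpha)
                 else th in
      p :: draw_aux alpha w' (S j) q th'
  end.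

Definition vertices (alpha : R) (w : list nat) : list pt :=
  draw_aux alpha w 1 (0, 0) (PI / 2).

Definition curve (alpha : R) (w : list nat) : pt -> Prop :=
  fun x => exists k : nat, (S k < length (vertices alpha w))%nat /\
    exists t : R, 0 <= t <= 1 /\
      x = ((1 - t) * fst (nth k (vertices alpha w) (0,0))
             + t * fst (nth (S k) (vertices alpha w) (0,0)),
           (1 - t) * snd (nth k (vertices alpha w) (0,0))
             + t * snd (nth (S k) (vertices alpha w) (0,0))).

Definition width (alpha : R) (w : list nat) : R :=
  dist2 (0, 0) (last (vertices alpha w) (0, 0)).

Definition dilate (c : R) (A : pt -> Prop) : pt -> Prop :=
  fun x => exists y, A y /\ x = (c * fst y, c * snd y).

Definition m_index (i k : nat) : nat :=
  if Nat.even i then (6 * k + 5)%nat else (6 * k + 3)%nat.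

Definition normalized_curve (i : nat) (alpha : R) (k : nat) : pt -> Prop :=
  dilate (sqrt 2 / width alpha (fib_word i (m_index i k)))
         (curve alpha (fib_word i (m_index i k))).

(* Hausdorff closeness: Hausdorff distance (variant with closed
   neighbourhoods) at most e. *)
Definition hclose (A B : pt -> Prop) (e : R) : Prop :=
  (forall x, A x -> exists y, B y /\ dist2 x y <= e) /\
  (forall y, B y -> exists x, A x /\ dist2 x y <= e).

Definition nonempty_set (A : pt -> Prop) : Prop := exists x, A x.
Definition closed_set (A : pt -> Prop) : Prop :=
  forall x, (forall e, 0 < e -> exists y, A y /\ dist2 x y < e) -> A x.
Definition bounded_set (A : pt -> Prop) : Prop :=
  exists M, forall x, A x -> dist2 (0, 0) x <= M.
Definition compact_set (A : pt -> Prop) : Prop := closed_set A /\ bounded_set A.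

Definition hausdorff_limit (S : nat -> pt -> Prop) (K : pt -> Prop) : Prop :=
  forall e, 0 < e -> exists k0, forall k, (k0 <= k)%nat -> hclose (S k) K e.

Definition fractal0 : pt -> Prop :=
  fun x => exists t, 0 <= t <= 1 /\ x = (0, t * sqrt 2).

From Stdlib Require Import Reals Lra Lia List Arith.
Import ListNotations.
Open Scope R_scope.

(* The word f_{m+2} = f_{m+1} f_m is drawn as the curve of f_{m+1} followed by
   a rigid copy of the curve of f_m, rotated by the total turning of f_{m+1}
   and mirrored when f_{m+1} has odd length; turnings and length parities are
   6-periodic in m.  So for small angle al the endpoints (X_m, Y_m) follow a
   small perturbation of a linear recursion whose period map is the identity:
   a norm invariant along the period gives |X_m| <= 30 al Y_m, while Y_m grows
   geometrically.  By induction on m every vertex then lies within 300 al Y_m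
   of the chord from 0 to the endpoint, and the normalized curve is within
   4 / Y_m + 1200 al of the vertical segment. *)

(* [fibw i m] is the word f^{[i]}_{m+1}. *)
Definition fibw (i m : nat) : list nat := fst (fibpair i m).

Lemma fibw_0 i : fibw i 0 = [0%nat].
Proof. reflexivity. Qed.

Lemma fibw_1 i : fibw i 1 = repeat 0%nat (i - 1) ++ [1%nat].
Proof. reflexivity. Qed.

Lemma fibw_SS i m : fibw i (S (S m)) = fibw i (S m) ++ fibw i m.
Proof. unfold fibw; simpl; destruct (fibpair i m); reflexivity. Qed.

Lemma fibw_neq_nil i m : (2 <= i)%nat -> fibw i m <> [].
Proof.
  intros Hi. induction m as [m IH] using (well_founded_induction lt_wf).
  destruct m as [|[|m]].
  - discriminate.
  - rewrite fibw_1. destruct (repeat 0%nat (i - 1)); discriminate.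
  - rewrite fibw_SS. intros H. apply app_eq_nil in H. exact (IH (S m) ltac:(lia) (proj1 H)).
Qed.

Fixpoint turn (w : list nat) (j : nat) : R :=
  match w with
  | [] => 0
  | a :: w' => (if Nat.eqb a 0 then (if Nat.even j then 1 else -1) else 0)
               + turn w' (S j)
  end.

Lemma turn_app u v j : turn (u ++ v) j = turn u j + turn v (j + length u).
Proof.
  revert j; induction u as [|a u IH]; intros j; simpl.
  - rewrite Nat.add_0_r; ring.
  - rewrite IH, Nat.add_succ_comm. ring.
Qed.

Lemma turn_S w j : turn w (S j) = - turn w j.
Proof.
  revert j; induction w as [|a w IH]; intros j; cbn [turn].
  - ring.
  - rewrite IH, Nat.even_succ, <- Nat.negb_even.
    destruct (Nat.eqb a 0), (Nat.even j); simpl; ring.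
Qed.

Lemma turn_add w j k :
  turn w (j + k) = if Nat.even k then turn w j else - turn w j.
Proof.
  induction k as [|k IH].
  - rewrite Nat.add_0_r; reflexivity.
  - rewrite Nat.add_succ_r, turn_S, IH, Nat.even_succ, <- Nat.negb_even.
    destruct (Nat.even k); simpl; ring.
Qed.

Lemma turn_repeat_even k j : turn (repeat 0%nat (2 * k)) j = 0.
Proof.
  revert j; induction k as [|k IH]; intros j; [reflexivity|].
  replace (2 * S k)%nat with (S (S (2 * k))) by lia.
  cbn [repeat turn Nat.eqb]. rewrite IH, Nat.even_succ, <- Nat.negb_even.
  destruct (Nat.even j); simpl; ring.
Qed.

(* Indexed by the parity of [i] and by [m mod 6]; see [fibw_periodic]. *)
Definition turn_table (b : bool) (r : nat) : R :=
  if b then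
    match r with 0 => -1 | 1 => -1 | 2 => -2 | 3 => -1 | 4 => 1 | _ => 0 end
  else
    match r with 0 => -1 | 1 => 0 | 2 => 1 | 3 => 1 | 4 => 0 | _ => -1 end.

Definition even_table (b : bool) (r : nat) : bool :=
  if b then
    match r with 0 => false | 1 => true | 2 => false | 3 => false | 4 => true | _ => false end
  else
    match r with 0 => false | 1 => false | 2 => true | 3 => false | 4 => false | _ => true end.

Lemma turn_table_range b r : -2 <= turn_table b r <= 1.
Proof. destruct b; do 6 (destruct r as [|r]; [simpl; lra|]); simpl; lra. Qed.

Lemma tables_SS b r : (r < 6)%nat ->
  turn_table b ((r + 2) mod 6) = turn_table b ((r + 1) mod 6) +
    (if even_table b ((r + 1) mod 6) then turn_table b r else - turn_table b r) /\
  even_table b ((r + 2) mod 6) = Bool.eqb (even_table b ((r + 1) mod 6)) (even_table b r).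
Proof.
  intros Hr. destruct b; do 6 (destruct r as [|r]; [simpl; split; [ring|reflexivity]|]); lia.
Qed.

Lemma turn_fibw_1 i : (2 <= i)%nat -> turn (fibw i 1) 1 = turn_table (Nat.even i) 1.
Proof.
  intros Hi. rewrite fibw_1, turn_app. cbn [turn Nat.eqb]. rewrite Rplus_0_r.
  destruct (Nat.Even_or_Odd i) as [[k Hk]|[k Hk]]; subst i.
  - replace (2 * k - 1)%nat with (S (2 * (k - 1))) by lia.
    rewrite Nat.even_mul. cbn [repeat turn Nat.eqb]. rewrite turn_repeat_even. simpl. ring.
  - replace (2 * k + 1 - 1)%nat with (2 * k)%nat by lia.
    rewrite turn_repeat_even, Nat.even_add, Nat.even_mul. simpl. ring.
Qed.

Lemma fibw_periodic i m : (2 <= i)%nat ->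
  turn (fibw i m) 1 = turn_table (Nat.even i) (m mod 6) /\
  Nat.even (length (fibw i m)) = even_table (Nat.even i) (m mod 6).
Proof.
  intros Hi. induction m as [m IH] using (well_founded_induction lt_wf).
  destruct m as [|[|m]].
  - destruct (Nat.even i); split; simpl; try ring; reflexivity.
  - split; [exact (turn_fibw_1 i Hi)|].
    rewrite fibw_1, length_app, repeat_length. cbn [length].
    replace (i - 1 + 1)%nat with i by lia. destruct (Nat.even i); reflexivity.
  - destruct (IH m ltac:(lia)) as [Ta Pa].
    destruct (IH (S m) ltac:(lia)) as [Tb Pb].
    rewrite fibw_SS, turn_app, length_app, turn_add, Nat.even_add.
    destruct (tables_SS (Nat.even i) (m mod 6)) as [R1 R2]; [apply Nat.mod_upper_bound; lia|].
    rewrite !Nat.Div0.add_mod_idemp_l in R1, R2.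
    rewrite <- Nat.add_1_r in Tb, Pb |- *. replace (S (m + 1)) with (m + 2)%nat by lia.
    rewrite R1, R2, <- Tb, <- Pb, <- Ta, <- Pa. split; [|reflexivity].
    destruct (Nat.even (length (fibw i (m + 1)))); reflexivity.
Qed.

Definition padd (p q : pt) : pt := (fst p + fst q, snd p + snd q).
Definition psub (p q : pt) : pt := (fst p - fst q, snd p - snd q).
Definition scale (s : R) (p : pt) : pt := (s * fst p, s * snd p).
Definition rot (t : R) (q : pt) : pt :=
  (fst q * cos t - snd q * sin t, fst q * sin t + snd q * cos t).
Definition mirror (q : pt) : pt := (- fst q, snd q).

Lemma rot_unit d a : rot d (cos a, sin a) = (cos (a + d), sin (a + d)).
Proof. unfold rot; simpl. rewrite cos_plus, sin_plus. f_equal; ring. Qed.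

Lemma dist2_nonneg p q : 0 <= dist2 p q.
Proof. apply sqrt_pos. Qed.

Lemma dist2_sym p q : dist2 p q = dist2 q p.
Proof. unfold dist2. f_equal. ring. Qed.

Lemma dist2_refl p : dist2 p p = 0.
Proof. unfold dist2. rewrite !Rminus_diag. replace (0 ^ 2 + 0 ^ 2) with 0 by ring. apply sqrt_0. Qed.

Lemma dist2_triangle p q r : dist2 p r <= dist2 p q + dist2 q r.
Proof.
  pose proof (triangle (fst p) (snd p) (fst r) (snd r) (fst q) (snd q)) as H.
  unfold dist_euc in H. unfold dist2. rewrite !Rsqr_pow2 in H. exact H.
Qed.

Lemma dist2_le_abs_sum p q : dist2 p q <= Rabs (fst p - fst q) + Rabs (snd p - snd q).
Proof.
  unfold dist2. set (a := fst p - fst q). set (b := snd p - snd q).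
  pose proof (Rabs_pos a); pose proof (Rabs_pos b).
  rewrite <- (sqrt_square (Rabs a + Rabs b)) by lra.
  apply sqrt_le_1_alt.
  rewrite <- (pow2_abs a), <- (pow2_abs b). nra.
Qed.

Lemma Rabs_snd_le_dist2 p q : Rabs (snd p - snd q) <= dist2 p q.
Proof.
  unfold dist2. rewrite <- sqrt_Rsqr_abs. apply sqrt_le_1_alt.
  rewrite <- !Rsqr_pow2. pose proof (Rle_0_sqr (fst p - fst q)). lra.
Qed.

Lemma dist2_padd e p q : dist2 (padd e p) (padd e q) = dist2 p q.
Proof. unfold dist2, padd; simpl. f_equal. ring. Qed.

Lemma dist2_rot t p q : dist2 (rot t p) (rot t q) = dist2 p q.
Proof.
  unfold dist2, rot; simpl. f_equal. pose proof (sin2_cos2 t) as H. unfold Rsqr in H.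
  transitivity (((fst p - fst q) ^ 2 + (snd p - snd q) ^ 2) * (sin t * sin t + cos t * cos t));
    [ring|rewrite H; ring].
Qed.

Lemma dist2_mirror p q : dist2 (mirror p) (mirror q) = dist2 p q.
Proof. unfold dist2, mirror; simpl. f_equal. ring. Qed.

Lemma dist2_scale c p q : 0 <= c -> dist2 (scale c p) (scale c q) = c * dist2 p q.
Proof.
  intros Hc. unfold dist2, scale; cbn [fst snd].
  replace ((c * fst p - c * fst q) ^ 2 + (c * snd p - c * snd q) ^ 2)
    with ((c * c) * ((fst p - fst q) ^ 2 + (snd p - snd q) ^ 2)) by ring.
  rewrite sqrt_mult_alt, sqrt_square by nra. reflexivity.
Qed.

Lemma draw_aux_neq_nil al w j p th : draw_aux al w j p th <> [].
Proof. destruct w; discriminate. Qed.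

Lemma draw_aux_length al w j p th : length (draw_aux al w j p th) = S (length w).
Proof. revert j p th; induction w; intros; simpl; auto. Qed.

Lemma last_cons_neq_nil {X} (x d : X) l : l <> [] -> last (x :: l) d = last l d.
Proof. destruct l; [contradiction|reflexivity]. Qed.

Lemma draw_aux_rigid al w : forall j p th p0 th0,
  draw_aux al w j p th =
  map (fun q => padd p (rot (th - th0) (psub q p0))) (draw_aux al w j p0 th0).
Proof.
  induction w as [|a w IH]; intros j p th p0 th0; simpl.
  - f_equal. unfold padd, psub, rot; simpl. destruct p; simpl; f_equal; ring.
  - f_equal.
    + unfold padd, psub, rot; destruct p; simpl; f_equal; ring.
    + set (th1 := if (a =? 0)%nat then if Nat.even j then th + al else th - al else th).
      set (th2 := if (a =? 0)%nat then if Nat.even j then th0 + al else th0 - al else th0).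
      assert (Hd : th1 - th2 = th - th0).
      { unfold th1, th2; destruct (a =? 0)%nat; [destruct (Nat.even j)|]; ring. }
      rewrite (IH (S j) _ th1 (fst p0 + cos th0, snd p0 + sin th0) th2), Hd.
      apply map_ext. intros q.
      pose proof (rot_unit (th - th0) th0) as HR.
      replace (th0 + (th - th0)) with th in HR by ring.
      unfold rot in HR; simpl in HR. injection HR as H1 H2.
      unfold padd, psub, rot; simpl. rewrite <- H1, <- H2. f_equal; ring.
Qed.

Lemma draw_aux_from al w j p th :
  draw_aux al w j p th =
  map (fun q => padd p (rot (th - PI/2) q)) (draw_aux al w j (0,0) (PI/2)).
Proof.
  rewrite (draw_aux_rigid al w j p th (0,0) (PI/2)). apply map_ext. intros [x y].
  unfold psub; simpl. rewrite !Rminus_0_r. reflexivity.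
Qed.

Lemma draw_aux_S al w : forall j p th,
  draw_aux al w (S j) p th = draw_aux (- al) w j p th.
Proof.
  induction w as [|a w IH]; intros j p th; cbn [draw_aux]; [reflexivity|].
  rewrite IH, Nat.even_succ, <- Nat.negb_even.
  destruct (a =? 0)%nat; [destruct (Nat.even j)|]; simpl; try reflexivity; do 2 f_equal; ring.
Qed.

Lemma draw_aux_add_even al w j k p th : Nat.even k = true ->
  draw_aux al w (k + j) p th = draw_aux al w j p th.
Proof.
  intros Hk. apply Nat.even_spec in Hk. destruct Hk as [l ->].
  induction l as [|l IHl]; [reflexivity|].
  replace (2 * S l + j)%nat with (S (S (2 * l + j))) by lia.
  rewrite !draw_aux_S, Ropp_involutive. exact IHl.
Qed.

Lemma draw_aux_mirror al w : forall j p th,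
  draw_aux (- al) w j (mirror p) (PI - th) = map mirror (draw_aux al w j p th).
Proof.
  induction w as [|a w IH]; intros j p th; simpl; [reflexivity|].
  f_equal.
  set (th1 := if (a =? 0)%nat then if Nat.even j then th + al else th - al else th).
  replace (if (a =? 0)%nat then if Nat.even j then PI - th + - al else PI - th - - al
           else PI - th) with (PI - th1)
    by (unfold th1; destruct (a =? 0)%nat; [destruct (Nat.even j)|]; ring).
  rewrite <- IH. unfold mirror; simpl.
  rewrite cos_minus, sin_minus, cos_PI, sin_PI. repeat f_equal; ring.
Qed.

Lemma draw_aux_opp al w j :
  draw_aux (- al) w j (0,0) (PI/2) = map mirror (draw_aux al w j (0,0) (PI/2)).
Proof.
  rewrite <- draw_aux_mirror. unfold mirror; simpl.
  replace (PI - PI/2) with (PI/2) by field. rewrite Ropp_0. reflexivity.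
Qed.

Lemma draw_aux_app al u : forall v j p th,
  draw_aux al (u ++ v) j p th =
  removelast (draw_aux al u j p th) ++
  draw_aux al v (j + length u) (last (draw_aux al u j p th) (0,0)) (th + al * turn u j).
Proof.
  induction u as [|a u IH]; intros v j p th.
  - simpl. rewrite Nat.add_0_r, Rmult_0_r, Rplus_0_r. reflexivity.
  - cbn [app draw_aux length turn]. rewrite IH.
    set (l := draw_aux al u (S j) _ _).
    assert (Hl : l <> []) by apply draw_aux_neq_nil.
    rewrite last_cons_neq_nil by exact Hl.
    replace (removelast (p :: l)) with (p :: removelast l)
      by (destruct l; [contradiction|reflexivity]).
    simpl. rewrite <- Nat.add_succ_comm. do 3 f_equal.
    destruct (a =? 0)%nat; [destruct (Nat.even j)|]; ring.
Qed.

Definition verts (i : nat) (al : R) (m : nat) : list pt := vertices al (fibw i m).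
Definition endpt (i : nat) (al : R) (m : nat) : pt := last (verts i al m) (0,0).
Definition endx (i : nat) (al : R) (m : nat) : R := fst (endpt i al m).
Definition endy (i : nat) (al : R) (m : nat) : R := snd (endpt i al m).
Definition turns (i m : nat) : R := turn (fibw i m) 1.
Definition even_len (i m : nat) : bool := Nat.even (length (fibw i m)).

(* The rigid motion carrying the drawing of a word, started at the origin,
   to its position after the drawing of [fibw i m].  After a word of odd
   length the signs of all turns flip, whence the mirror. *)
Definition attach (i : nat) (al : R) (m : nat) (q : pt) : pt :=
  padd (endpt i al m) (rot (al * turns i m) (if even_len i m then q else mirror q)).

Lemma verts_0 i al : verts i al 0 = [(0,0); (0,1)].
Proof.
  unfold verts, vertices. rewrite fibw_0. simpl. rewrite cos_PI2, sin_PI2.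
  repeat f_equal; ring.
Qed.

Lemma endpt_0 i al : endpt i al 0 = (0,1).
Proof. unfold endpt. rewrite verts_0. reflexivity. Qed.

Lemma verts_SS i al m :
  verts i al (S (S m)) = removelast (verts i al (S m)) ++ map (attach i al (S m)) (verts i al m).
Proof.
  unfold verts, vertices. rewrite fibw_SS, draw_aux_app, (draw_aux_from al (fibw i m)). f_equal.
  unfold attach, endpt, verts, turns, even_len, vertices.
  replace (PI / 2 + al * turn (fibw i (S m)) 1 - PI / 2) with (al * turn (fibw i (S m)) 1) by ring.
  destruct (Nat.even (length (fibw i (S m)))) eqn:HL.
  - rewrite Nat.add_comm, draw_aux_add_even by exact HL. reflexivity.
  - destruct (length (fibw i (S m))) as [|L]; [discriminate|].
    rewrite Nat.even_succ, <- Nat.negb_even, Bool.negb_false_iff in HL.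
    replace (1 + S L)%nat with (S (L + 1)) by lia.
    rewrite (draw_aux_S al (fibw i m) (L + 1)), draw_aux_add_even, draw_aux_opp, map_map by exact HL.
    reflexivity.
Qed.

Lemma endpt_SS i al m : endpt i al (S (S m)) = attach i al (S m) (endpt i al m).
Proof.
  unfold endpt at 1. rewrite verts_SS.
  destruct (exists_last (draw_aux_neq_nil al (fibw i m) 1 (0,0) (PI/2))) as [l [x E]].
  unfold endpt, verts, vertices. rewrite E, map_app, app_assoc. simpl. rewrite !last_last. reflexivity.
Qed.

Lemma In_removelast {X} (l : list X) x : In x (removelast l) -> In x l.
Proof.
  induction l as [|a l IH]; simpl; [tauto|].
  destruct l as [|b l]; simpl; [tauto|]. intros [H|H]; [left|right; apply IH]; exact H.
Qed.

Lemma In_verts_SS i al m q : In q (verts i al (S (S m))) ->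
  In q (verts i al (S m)) \/ exists r, In r (verts i al m) /\ q = attach i al (S m) r.
Proof.
  rewrite verts_SS. intros H. apply in_app_or in H. destruct H as [H|H].
  - left. apply In_removelast. exact H.
  - right. apply in_map_iff in H. destruct H as [r [<- H]]. exists r. auto.
Qed.


(* The vertices of [0^k 1]: the steps alternate between (0,1) and
   (sin al, cos al), starting with (0,1). *)
Definition zigzag (al : R) (n : nat) : pt :=
  (INR (Nat.div2 n) * sin al, INR (n - Nat.div2 n) + INR (Nat.div2 n) * cos al).

Lemma zigzag_SS al n :
  zigzag al (S (S n)) = padd (sin al, 1 + cos al) (zigzag al n).
Proof.
  pose proof (Nat.div2_odd n) as Hn.
  unfold zigzag, padd. cbn [Nat.div2 fst snd].
  replace (S (S n) - S (Nat.div2 n))%nat with (S (n - Nat.div2 n)) by lia.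
  rewrite !S_INR. f_equal; ring.
Qed.

Lemma draw_aux_zigzag al k : forall p,
  let l := draw_aux al (repeat 0%nat k ++ [1%nat]) 1 p (PI/2) in
  (forall q, In q l -> exists n, (n <= S k)%nat /\ q = padd p (zigzag al n)) /\
  last l (0,0) = padd p (zigzag al (S k)).
Proof.
  induction k as [k IH] using (well_founded_induction lt_wf). intros p l.
  assert (Hz0 : padd p (zigzag al 0) = p)
    by (destruct p; unfold padd, zigzag; simpl; f_equal; ring).
  assert (Hz1 : padd p (zigzag al 1) = (fst p + 0, snd p + 1))
    by (unfold padd, zigzag; simpl; f_equal; ring).
  destruct k as [|[|k]]; subst l; cbn [repeat app draw_aux Nat.eqb Nat.even];
    rewrite ?cos_PI2, ?sin_PI2.
  - split; [|symmetry; exact Hz1].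
    intros q [<-|[<-|[]]]; [exists 0%nat|exists 1%nat]; split; auto.
  - rewrite cos_shift, sin_shift.
    assert (Hz2 : padd p (zigzag al 2) = (fst p + 0 + sin al, snd p + 1 + cos al))
      by (rewrite zigzag_SS, <- Hz0; unfold padd, zigzag; simpl; f_equal; ring).
    split; [|symmetry; exact Hz2].
    intros q [<-|[<-|[<-|[]]]]; [exists 0%nat|exists 1%nat|exists 2%nat]; split; auto.
  - rewrite cos_shift, sin_shift. replace (PI / 2 - al + al) with (PI / 2) by ring.
    set (p2 := (fst (fst p + 0, snd p + 1) + sin al, snd (fst p + 0, snd p + 1) + cos al)).
    assert (Hp2 : forall n, padd p2 (zigzag al n) = padd p (zigzag al (S (S n)))).
    { intros n. rewrite zigzag_SS. unfold p2, padd; simpl. f_equal; ring. }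
    change 3%nat with (2 + 1)%nat. rewrite draw_aux_add_even by reflexivity.
    destruct (IH k ltac:(lia) p2) as [Hin Hlast].
    rewrite !last_cons_neq_nil by first [discriminate | apply draw_aux_neq_nil].
    split; [|rewrite Hlast; apply Hp2].
    intros q [<-|[<-|Hq]].
    + exists 0%nat. split; [lia|auto].
    + exists 1%nat. split; [lia|auto].
    + destruct (Hin q Hq) as [n [Hn ->]]. exists (S (S n)). split; [lia|apply Hp2].
Qed.

Lemma zigzag_cone al n : 0 <= sin al -> 0 <= cos al ->
  0 <= fst (zigzag al n) <= sin al * snd (zigzag al n).
Proof.
  intros Hs Hc. pose proof (Nat.div2_odd n).
  assert (Hd : INR (Nat.div2 n) <= INR (n - Nat.div2 n)) by (apply le_INR; lia).
  pose proof (pos_INR (Nat.div2 n)).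
  assert (0 <= sin al * (INR (Nat.div2 n) * cos al))
    by (apply Rmult_le_pos; [|apply Rmult_le_pos]; lra).
  unfold zigzag; cbn [fst snd]. split; nra.
Qed.

Lemma zigzag_snd_le al n m : 0 <= cos al -> (n <= m)%nat ->
  snd (zigzag al n) <= snd (zigzag al m).
Proof.
  intros Hc Hnm. pose proof (Nat.div2_odd n). pose proof (Nat.div2_odd m).
  assert (Hd : (Nat.div2 n <= Nat.div2 m)%nat) by (apply Nat.div2_le_mono; exact Hnm).
  assert (INR (Nat.div2 n) <= INR (Nat.div2 m)) by (apply le_INR; exact Hd).
  assert (INR (n - Nat.div2 n) <= INR (m - Nat.div2 m)).
  { apply le_INR. destruct (Nat.odd n), (Nat.odd m); cbn [Nat.b2n] in *; lia. }
  assert (INR (Nat.div2 n) * cos al <= INR (Nat.div2 m) * cos al)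
    by (apply Rmult_le_compat_r; assumption).
  unfold zigzag; cbn [fst snd]. lra.
Qed.

Lemma zigzag_snd_ge1 al n : 0 <= cos al -> 1 <= snd (zigzag al (S n)).
Proof.
  intros Hc. pose proof (Nat.div2_odd (S n)). pose proof (pos_INR (Nat.div2 (S n))).
  assert (1 <= INR (S n - Nat.div2 (S n))).
  { apply (le_INR 1). destruct (Nat.odd (S n)); cbn [Nat.b2n] in *; lia. }
  assert (0 <= INR (Nat.div2 (S n)) * cos al) by (apply Rmult_le_pos; assumption).
  unfold zigzag; cbn [fst snd]. lra.
Qed.

Lemma verts_1 i al : 0 <= sin al -> 0 <= cos al ->
  (forall q, In q (verts i al 1) -> 0 <= fst q <= sin al * snd q /\ 0 <= snd q <= endy i al 1) /\
  0 <= endx i al 1 <= sin al * endy i al 1 /\ 1 <= endy i al 1.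
Proof.
  intros Hs Hc. destruct (draw_aux_zigzag al (i - 1) (0,0)) as [Hin Hlast].
  assert (H0 : forall n, padd (0,0) (zigzag al n) = zigzag al n)
    by (intros n; unfold padd; cbn [fst snd]; rewrite !Rplus_0_l; symmetry; apply surjective_pairing).
  unfold endx, endy, endpt, verts, vertices. rewrite fibw_1, Hlast, H0.
  split; [|split; [apply zigzag_cone|apply zigzag_snd_ge1]; assumption].
  intros q Hq. destruct (Hin q Hq) as [n [Hn ->]]. rewrite H0.
  split; [apply zigzag_cone; assumption|split; [|apply zigzag_snd_le; assumption]].
  eapply Rle_trans; [|apply (zigzag_snd_le al 0 n Hc); lia]. simpl. lra.
Qed.

Definition sign (b : bool) : R := if b then 1 else -1.

Lemma Rabs_sign b : Rabs (sign b) = 1.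
Proof. destruct b; simpl; unfold Rabs; destruct Rcase_abs; lra. Qed.

(* Norms adapted to the recursion x'' = x' + sign x along the period of
   [even_table]: the linear forms of phase r+1, composed with the step of
   phase r, are those of phase r (the six steps of a period compose to the
   identity). *)
Definition cycle_forms (b : bool) (r : nat) : R * R * R * R :=
  if b then
    match r with
    | 0 => (1,0,0,1) | 1 => (0,1,-1,1) | 2 => (1,-1,1,-2)
    | 3 => (1,0,2,-1) | 4 => (0,1,1,1) | _ => (1,-1,1,0) end
  else
    match r with
    | 0 => (1,0,0,1) | 1 => (0,1,-1,1) | 2 => (-1,1,-1,0)
    | 3 => (1,-2,0,-1) | 4 => (2,-1,1,-1) | _ => (1,1,1,0) end.

Definition cycle_norm (b : bool) (r : nat) (x x' : R) : R :=
  let '(a, b1, c, d) := cycle_forms b r in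
  Rmax (Rabs (a * x + b1 * x')) (Rabs (c * x + d * x')).

Lemma cycle_norm_step b r x x' : (r < 6)%nat ->
  cycle_norm b (S r mod 6) (x + sign (even_table b r) * x') x = cycle_norm b r x x'.
Proof.
  intros Hr. unfold cycle_norm, sign.
  destruct b; do 6 (destruct r as [|r]; [simpl; f_equal; f_equal; ring|]); lia.
Qed.

Lemma Rmax_abs_perturb a b c d x x' f : Rabs a <= 2 -> Rabs c <= 2 ->
  Rmax (Rabs (a * (x + f) + b * x')) (Rabs (c * (x + f) + d * x'))
  <= Rmax (Rabs (a * x + b * x')) (Rabs (c * x + d * x')) + 2 * Rabs f.
Proof.
  intros Ha Hc.
  assert (Hu : Rabs (a * (x + f) + b * x') <= Rabs (a * x + b * x') + 2 * Rabs f).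
  { replace (a * (x + f) + b * x') with ((a * x + b * x') + a * f) by ring.
    eapply Rle_trans; [apply Rabs_triang|]. rewrite Rabs_mult.
    pose proof (Rabs_pos f). nra. }
  assert (Hv : Rabs (c * (x + f) + d * x') <= Rabs (c * x + d * x') + 2 * Rabs f).
  { replace (c * (x + f) + d * x') with ((c * x + d * x') + c * f) by ring.
    eapply Rle_trans; [apply Rabs_triang|]. rewrite Rabs_mult.
    pose proof (Rabs_pos f). nra. }
  pose proof (Rmax_l (Rabs (a * x + b * x')) (Rabs (c * x + d * x'))).
  pose proof (Rmax_r (Rabs (a * x + b * x')) (Rabs (c * x + d * x'))).
  apply Rmax_lub; lra.
Qed.

Lemma cycle_norm_perturb b r x x' f :
  cycle_norm b r (x + f) x' <= cycle_norm b r x x' + 2 * Rabs f.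
Proof.
  unfold cycle_norm. destruct (cycle_forms b r) as [[[a b1] c] d] eqn:E.
  apply Rmax_abs_perturb;
    destruct b; do 6 (try destruct r as [|r]); simpl in E; injection E as <- <- <- <-;
    unfold Rabs; destruct Rcase_abs; lra.
Qed.

Ltac max_abs_cases :=
  unfold Rmax; repeat destruct Rle_dec; unfold Rabs in *; repeat destruct Rcase_abs; lra.

Lemma Rabs_le_cycle_norm b r x x' : (r < 6)%nat ->
  Rabs x <= 3 * cycle_norm b r x x' /\ Rabs x' <= 3 * cycle_norm b r x x'.
Proof.
  intros Hr. unfold cycle_norm.
  destruct b; do 6 (destruct r as [|r]; [simpl; split; max_abs_cases|]); lia.
Qed.

Lemma cycle_norm_le b r x x' : (r < 6)%nat -> cycle_norm b r x x' <= 3 * Rmax (Rabs x) (Rabs x').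
Proof.
  intros Hr. unfold cycle_norm.
  destruct b; do 6 (destruct r as [|r]; [simpl; max_abs_cases|]); lia.
Qed.

Lemma endpt_SS_coords i al m :
  let c := cos (al * turns i (S m)) in let s := sin (al * turns i (S m)) in
  let sg := sign (even_len i (S m)) in
  endx i al (S (S m)) =
    endx i al (S m) + sg * endx i al m + ((c - 1) * sg * endx i al m - s * endy i al m) /\
  endy i al (S (S m)) = endy i al (S m) + sg * s * endx i al m + c * endy i al m.
Proof.
  intros c s sg. unfold endx, endy. rewrite endpt_SS. unfold attach, sg, sign, c, s.
  destruct (even_len i (S m)); unfold rot, mirror, padd; simpl; split; ring.
Qed.

Lemma Rabs_sin_le t : Rabs (sin t) <= Rabs t.
Proof.
  pose proof (SIN_bound t) as Hb. pose proof PI2_1 as Hpi.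
  destruct (Rle_dec 1 (Rabs t)) as [H|H].
  - unfold Rabs in *. destruct (Rcase_abs (sin t)); destruct (Rcase_abs t); lra.
  - apply Rnot_le_lt in H.
    destruct (Rtotal_order t 0) as [Hn|[->|Hp]].
    + rewrite (Rabs_left t) in H |- * by lra.
      pose proof (sin_lt_x (- t) ltac:(lra)) as H1.
      pose proof (sin_ge_0 (- t) ltac:(lra) ltac:(lra)) as H2.
      rewrite sin_neg in H1, H2. rewrite Rabs_left1 by lra. lra.
    + rewrite sin_0, Rabs_R0. lra.
    + rewrite (Rabs_right t) in H |- * by lra.
      pose proof (sin_lt_x t Hp) as H1.
      pose proof (sin_ge_0 t ltac:(lra) ltac:(lra)) as H2.
      rewrite Rabs_right by lra. lra.
Qed.

Lemma cos_ge_1_minus_sqr t : 1 - t * t / 2 <= cos t.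
Proof.
  replace (cos t) with (cos (2 * (t / 2))) by (f_equal; field).
  rewrite cos_2a_sin.
  assert (sin (t/2) * sin (t/2) <= (t/2) * (t/2))
    by exact (Rsqr_le_abs_1 _ _ (Rabs_sin_le (t/2))).
  lra.
Qed.


Definition near_chord (i : nat) (al : R) (m : nat) (D : R) : Prop :=
  forall q, In q (verts i al m) ->
    exists s, 0 <= s <= 1 /\ dist2 q (scale s (endpt i al m)) <= D.

Lemma Rdiv_unit_interval v Y : 0 < Y -> 0 <= v <= Y -> 0 <= v / Y <= 1.
Proof.
  intros HY Hv. assert (0 < / Y) by (apply Rinv_0_lt_compat; lra).
  unfold Rdiv. split; [nra|]. replace 1 with (Y * / Y) by (field; lra). nra.
Qed.

Lemma chord_point_close X Y u v : 0 < Y -> 0 <= v <= Y ->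
  exists t, 0 <= t <= 1 /\ dist2 (u, v) (scale t (X, Y)) <= Rabs u + Rabs X.
Proof.
  intros HY Hv. pose proof (Rdiv_unit_interval v Y HY Hv). exists (v / Y). split; [assumption|].
  eapply Rle_trans; [apply dist2_le_abs_sum|]. unfold scale; simpl.
    replace (v - v / Y * Y) with 0 by (field; lra). rewrite Rabs_R0, Rplus_0_r.
    unfold Rminus. eapply Rle_trans; [apply Rabs_triang|].
  rewrite Rabs_Ropp, Rabs_mult, (Rabs_right (v / Y)) by lra. pose proof (Rabs_pos X). nra.
Qed.

Lemma attach_scale i al m s v :
  attach i al m (scale s v) =
  padd (endpt i al m) (scale s (psub (attach i al m v) (endpt i al m))).
Proof.
  unfold attach, scale. destruct (even_len i m); unfold rot, mirror, padd, psub; simpl; f_equal; ring.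
Qed.

Lemma near_chord_weaken i al m D D' : D <= D' -> near_chord i al m D -> near_chord i al m D'.
Proof. intros HD H q Hq. destruct (H q Hq) as [s [Hs Hd]]. exists s. split; [exact Hs|lra]. Qed.

Lemma near_chord_0 i al : near_chord i al 0 0.
Proof.
  intros q Hq. rewrite verts_0 in Hq. rewrite endpt_0.
  destruct Hq as [<-|[<-|[]]]; [exists 0|exists 1]; split; try lra;
    unfold scale; simpl; rewrite ?Rmult_0_l, ?Rmult_1_l, dist2_refl; lra.
Qed.

Lemma near_chord_SS i al m Da Db :
  0 < endy i al (S m) <= endy i al (S (S m)) ->
  near_chord i al m Da -> near_chord i al (S m) Db ->
  near_chord i al (S (S m))
    (Rmax Da Db + Rabs (endx i al (S m)) + 2 * Rabs (endx i al (S (S m)))).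
Proof.
  intros HY Ha Hb q Hq.
  unfold endx, endy in *.
  destruct (endpt i al (S m)) as [X1 Y1] eqn:E1.
  destruct (endpt i al (S (S m))) as [X2 Y2] eqn:E2. simpl in *.
  pose proof (Rmax_l Da Db). pose proof (Rmax_r Da Db). pose proof (Rabs_pos X2).
  destruct (In_verts_SS i al m q Hq) as [Hin|[r [Hr ->]]].
  - destruct (Hb q Hin) as [s [Hs Hd]]. rewrite E1 in Hd.
    destruct (chord_point_close X2 Y2 (s * X1) (s * Y1)) as [t [Ht Hdt]]; [lra|nra|].
    exists t. split; [exact Ht|].
    eapply Rle_trans; [apply (dist2_triangle _ (scale s (X1, Y1)))|].
    assert (Rabs (s * X1) <= Rabs X1)
      by (rewrite Rabs_mult, (Rabs_right s) by lra; pose proof (Rabs_pos X1); nra).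
    unfold scale in *; simpl in *. lra.
  - destruct (Ha r Hr) as [s [Hs Hd]].
    assert (Hg : dist2 (attach i al (S m) r) (attach i al (S m) (scale s (endpt i al m))) <= Da).
    { unfold attach. rewrite dist2_padd, dist2_rot.
      destruct (even_len i (S m)); [|rewrite dist2_mirror]; exact Hd. }
    rewrite attach_scale, <- endpt_SS, E1, E2 in Hg. unfold padd, psub, scale in Hg; simpl in Hg.
    destruct (chord_point_close X2 Y2 (X1 + s * (X2 - X1)) (Y1 + s * (Y2 - Y1)))
      as [t [Ht Hdt]]; [lra|nra|].
    exists t. split; [exact Ht|].
    eapply Rle_trans; [apply (dist2_triangle _ (X1 + s * (X2 - X1), Y1 + s * (Y2 - Y1)))|].
    assert (Rabs (X1 + s * (X2 - X1)) <= Rabs X1 + Rabs X2).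
    { replace (X1 + s * (X2 - X1)) with ((1 - s) * X1 + s * X2) by ring.
      eapply Rle_trans; [apply Rabs_triang|].
      rewrite !Rabs_mult, (Rabs_right s), (Rabs_right (1 - s)) by lra.
      pose proof (Rabs_pos X1). nra. }
    lra.
Qed.

Lemma hclose_sym A B d : hclose A B d -> hclose B A d.
Proof.
  intros [H1 H2]. split.
  - intros y Hy. destruct (H2 y Hy) as [x [Hx Hd]]. exists x. rewrite dist2_sym. auto.
  - intros x Hx. destruct (H1 x Hx) as [y [Hy Hd]]. exists y. rewrite dist2_sym. auto.
Qed.

Lemma hclose_trans A B C d1 d2 : hclose A B d1 -> hclose B C d2 -> hclose A C (d1 + d2).
Proof.
  intros [H1 H2] [H3 H4]. split.
  - intros x Hx. destruct (H1 x Hx) as [y [Hy Hxy]]. destruct (H3 y Hy) as [z [Hz Hyz]].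
    exists z. split; [exact Hz|]. pose proof (dist2_triangle x y z). lra.
  - intros z Hz. destruct (H4 z Hz) as [y [Hy Hyz]]. destruct (H2 y Hy) as [x [Hx Hxy]].
    exists x. split; [exact Hx|]. pose proof (dist2_triangle x y z). lra.
Qed.

Lemma hclose_weaken A B d d' : d <= d' -> hclose A B d -> hclose A B d'.
Proof.
  intros Hd [H1 H2]. split.
  - intros x Hx. destruct (H1 x Hx) as [y [Hy H]]. exists y. split; [auto|lra].
  - intros y Hy. destruct (H2 y Hy) as [x [Hx H]]. exists x. split; [auto|lra].
Qed.

Lemma hclose_dilate A B c d : 0 <= c -> hclose A B d -> hclose (dilate c A) (dilate c B) (c * d).
Proof.
  intros Hc [H1 H2]. split.
  - intros x [x0 [Hx0 ->]]. destruct (H1 x0 Hx0) as [y0 [Hy0 Hd]].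
    exists (scale c y0). split; [exists y0; auto|].
    change (dist2 (scale c x0) (scale c y0) <= c * d). rewrite dist2_scale by exact Hc.
    apply Rmult_le_compat_l; assumption.
  - intros y [y0 [Hy0 ->]]. destruct (H2 y0 Hy0) as [x0 [Hx0 Hd]].
    exists (scale c x0). split; [exists x0; auto|].
    change (dist2 (scale c x0) (scale c y0) <= c * d). rewrite dist2_scale by exact Hc.
    apply Rmult_le_compat_l; assumption.
Qed.

Definition segment (E : pt) : pt -> Prop :=
  fun x => exists s, 0 <= s <= 1 /\ x = scale s E.

Lemma dist2_scale_scale s t E :
  dist2 (scale s E) (scale t E) <= Rabs (s - t) * (Rabs (fst E) + Rabs (snd E)).
Proof.
  eapply Rle_trans; [apply dist2_le_abs_sum|]. unfold scale; simpl.
  rewrite <- !Rmult_minus_distr_r, !Rabs_mult. lra.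
Qed.

Lemma snd_le_dist2_origin X Y : 0 <= Y -> Y <= dist2 (0,0) (X, Y).
Proof.
  intros HY. pose proof (Rabs_snd_le_dist2 (0,0) (X, Y)) as H.
  simpl in H. rewrite Rminus_0_l, Rabs_Ropp, Rabs_right in H by lra. exact H.
Qed.

Lemma hclose_dilate_segment X Y : 0 < Y ->
  let c := sqrt 2 / dist2 (0,0) (X, Y) in
  hclose (dilate c (segment (X, Y))) fractal0 (2 * c * Rabs X).
Proof.
  intros HY c.
  set (W := dist2 (0,0) (X, Y)) in c.
  assert (HWY : Y <= W) by (apply snd_le_dist2_origin; lra).
  assert (HWX : W <= Rabs X + Y).
  { pose proof (dist2_le_abs_sum (0,0) (X, Y)) as H. simpl in H.
    rewrite !Rminus_0_l, !Rabs_Ropp, (Rabs_right Y) in H by lra. exact H. }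
  assert (Hc : 0 < c) by (apply Rdiv_lt_0_compat; [apply Rlt_sqrt2_0|lra]).
  assert (HcW : c * W = sqrt 2) by (unfold c; field; lra).
  assert (Hclose : forall s, 0 <= s <= 1 ->
            dist2 (scale c (scale s (X, Y))) (0, s * sqrt 2) <= 2 * c * Rabs X).
  { intros s Hs. eapply Rle_trans; [apply dist2_le_abs_sum|]. unfold scale; simpl.
    replace (c * (s * X) - 0) with (s * (c * X)) by ring.
    replace (c * (s * Y) - s * sqrt 2) with (s * (c * (Y - W))) by (rewrite <- HcW; ring).
    rewrite !Rabs_mult, (Rabs_right s), (Rabs_right c), (Rabs_left1 (Y - W)) by lra.
    pose proof (Rabs_pos X). assert (0 <= c * Rabs X) by nra.
    assert (c * - (Y - W) <= c * Rabs X) by (apply Rmult_le_compat_l; lra).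
    assert (0 <= c * - (Y - W)) by nra.
    assert (s * (c * Rabs X) <= c * Rabs X) by nra.
    assert (s * (c * - (Y - W)) <= c * - (Y - W)) by nra.
    lra. }
  split.
  - intros x [y [[s [Hs ->]] ->]]. exists (0, s * sqrt 2). split; [exists s; auto|exact (Hclose s Hs)].
  - intros z [s [Hs ->]]. exists (scale c (scale s (X, Y))).
    split; [exists (scale s (X, Y)); split; [exists s; auto|reflexivity]|exact (Hclose s Hs)].
Qed.

Lemma draw_aux_unit_steps al w : forall j p th k, (S k < length (draw_aux al w j p th))%nat ->
  dist2 (nth k (draw_aux al w j p th) (0,0)) (nth (S k) (draw_aux al w j p th) (0,0)) = 1.
Proof.
  induction w as [|a w IH]; intros j p th k Hk; simpl in Hk; [lia|].
  destruct k as [|k].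
  - cbn [draw_aux nth]. rewrite <- sqrt_1. unfold dist2. f_equal.
    pose proof (sin2_cos2 th) as H. unfold Rsqr in H. destruct w; simpl; nra.
  - cbn [draw_aux nth]. apply IH. rewrite draw_aux_length in *. lia.
Qed.

Lemma draw_aux_ivt al w : forall j p th t,
  snd p <= t <= snd (last (draw_aux al w j p th) (0,0)) ->
  exists q, In q (draw_aux al w j p th) /\ Rabs (snd q - t) <= 1.
Proof.
  induction w as [|a w IH]; intros j p th t Ht.
  - exists p. split; [left; reflexivity|]. simpl in Ht. rewrite Rabs_left1; lra.
  - destruct (Rle_dec t (snd p + 1)) as [H|H].
    + exists p. split; [left; reflexivity|]. unfold Rabs; destruct Rcase_abs; lra.
    + cbn [draw_aux] in *. rewrite last_cons_neq_nil in Ht by apply draw_aux_neq_nil.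
      destruct (IH (S j) (fst p + cos th, snd p + sin th)
        (if (a =? 0)%nat then if Nat.even j then th + al else th - al else th) t) as [q [Hq1 Hq2]].
      * simpl. pose proof (SIN_bound th). lra.
      * exists q. split; [right; exact Hq1|exact Hq2].
Qed.

Lemma In_vertices_curve al w q : w <> [] -> In q (vertices al w) -> curve al w q.
Proof.
  intros Hw Hq. apply In_nth with (d := (0,0)) in Hq. destruct Hq as [k [Hk E]].
  unfold vertices in Hk. rewrite draw_aux_length in Hk.
  destruct (Nat.lt_ge_cases (S k) (S (length w))) as [H|H].
  - exists k. split; [unfold vertices; rewrite draw_aux_length; exact H|].
    exists 0. split; [lra|]. rewrite <- E. destruct (nth k _ _) as [a b]. simpl. f_equal; ring.
  - destruct k as [|k]; [destruct w; [contradiction|simpl in H; lia]|].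
    exists k. split; [unfold vertices; rewrite draw_aux_length; lia|].
    exists 1. split; [lra|]. rewrite <- E. destruct (nth (S k) _ _) as [a b]. simpl. f_equal; ring.
Qed.

Lemma curve_near_vertex al w x : curve al w x ->
  exists q, In q (vertices al w) /\ dist2 x q <= 1.
Proof.
  intros [k [Hk [t [Ht ->]]]]. exists (nth k (vertices al w) (0,0)). split; [apply nth_In; lia|].
  pose proof (draw_aux_unit_steps al w 1 (0,0) (PI/2) k Hk) as H1. fold (vertices al w) in H1.
  set (a := nth k _ _) in *. set (b := nth (S k) _ _) in *.
  unfold dist2 in *; cbn [fst snd].
  replace (((1 - t) * fst a + t * fst b - fst a) ^ 2 + ((1 - t) * snd a + t * snd b - snd a) ^ 2)
    with ((t * t) * ((fst a - fst b) ^ 2 + (snd a - snd b) ^ 2)) by ring.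
  rewrite sqrt_mult_alt, H1, sqrt_square by nra. lra.
Qed.

Lemma hclose_curve_segment al w X Y D : w <> [] -> 0 < Y ->
  last (vertices al w) (0,0) = (X, Y) ->
  (forall q, In q (vertices al w) -> exists s, 0 <= s <= 1 /\ dist2 q (scale s (X, Y)) <= D) ->
  hclose (curve al w) (segment (X, Y)) ((1 + D) * (2 + Rabs X / Y)).
Proof.
  intros Hw HY Hlast Hnear.
  assert (HD : 0 <= D).
  { destruct (Hnear (0,0)) as [s [_ Hd]]; [destruct w; left; reflexivity|].
    pose proof (dist2_nonneg (0,0) (scale s (X, Y))). lra. }
  assert (HXY : 0 <= Rabs X / Y) by (apply Rle_mult_inv_pos; [apply Rabs_pos|lra]).
  split.
  - intros x Hx. destruct (curve_near_vertex al w x Hx) as [q [Hq Hxq]].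
    destruct (Hnear q Hq) as [s [Hs Hqs]].
    exists (scale s (X, Y)). split; [exists s; auto|].
    pose proof (dist2_triangle x q (scale s (X, Y))). nra.
  - intros z [t [Ht ->]].
    destruct (draw_aux_ivt al w 1 (0,0) (PI/2) (t * Y)) as [q [Hq Hqt]].
    { fold (vertices al w). rewrite Hlast. simpl. nra. }
    fold (vertices al w) in Hq. destruct (Hnear q Hq) as [s [Hs Hqs]].
    exists q. split; [exact (In_vertices_curve al w q Hw Hq)|].
    assert (Hst : Rabs (s - t) * Y <= 1 + D).
    { pose proof (Rabs_snd_le_dist2 q (scale s (X, Y))) as H.
      change (snd (scale s (X, Y))) with (s * Y) in H.
      rewrite <- (Rabs_right Y), <- Rabs_mult by lra.
      replace ((s - t) * Y) with (- (snd q - s * Y) + (snd q - t * Y)) by ring.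
      eapply Rle_trans; [apply Rabs_triang|]. rewrite Rabs_Ropp. lra. }
    pose proof (dist2_scale_scale t s (X, Y)) as Hts. simpl in Hts.
    rewrite Rabs_minus_sym, (Rabs_right Y) in Hts by lra.
    assert (Rabs (s - t) * (Rabs X + Y) = Rabs (s - t) * Y * (1 + Rabs X / Y)) by (field; lra).
    assert (Rabs (s - t) * Y * (1 + Rabs X / Y) <= (1 + D) * (1 + Rabs X / Y))
      by (apply Rmult_le_compat_r; lra).
    pose proof (dist2_triangle (scale t (X, Y)) (scale s (X, Y)) q) as Htri.
    rewrite (dist2_sym (scale s (X, Y)) q) in Htri. rewrite dist2_sym.
    replace ((1 + D) * (2 + Rabs X / Y)) with ((1 + D) * (1 + Rabs X / Y) + (1 + D)) by ring.
    lra.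
Qed.
Section SmallAngle.

Variable i : nat.
Variable al : R.
Hypothesis Hi : (2 <= i)%nat.
Hypothesis Hal : 0 < al <= 1/100.

Lemma sin_cos_small : 0 <= sin al <= al /\ 0 <= cos al.
Proof.
  pose proof PI2_1. split; [split|].
  - apply sin_ge_0; lra.
  - pose proof (sin_lt_x al ltac:(lra)). lra.
  - apply cos_ge_0; lra.
Qed.

Lemma turn_trig_small m :
  Rabs (sin (al * turns i m)) <= 2 * al /\ 1 - 2 * al * al <= cos (al * turns i m) <= 1.
Proof.
  destruct (fibw_periodic i m Hi) as [HT _]. fold (turns i m) in HT.
  pose proof (turn_table_range (Nat.even i) (m mod 6)) as HR. rewrite <- HT in HR.
  set (T := turns i m) in *.
  assert (HT2 : T * T <= 4) by nra.
  split; [|split].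
  - eapply Rle_trans; [apply Rabs_sin_le|]. rewrite Rabs_mult, Rabs_right by lra.
    assert (Rabs T <= 2) by (unfold Rabs; destruct Rcase_abs; lra). nra.
  - pose proof (cos_ge_1_minus_sqr (al * T)).
    assert (al * T * (al * T) <= 4 * (al * al)).
    { replace (al * T * (al * T)) with ((al * al) * (T * T)) by ring.
      rewrite (Rmult_comm 4). apply Rmult_le_compat_l; nra. }
    lra.
  - pose proof (COS_bound (al * T)). lra.
Qed.

Lemma recursion_estimate c s sg X0 Y0 Y1 Phi Phi' :
  Rabs s <= 2 * al -> 1 - 2 * al * al <= c <= 1 -> Rabs sg = 1 ->
  1 <= Y0 <= Y1 -> 49/100 * Y1 <= Y0 ->
  Phi <= 10 * al * Y1 -> Rabs X0 <= 3 * Phi ->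
  Phi' <= Phi + 2 * Rabs ((c - 1) * sg * X0 - s * Y0) ->
  let Y2 := Y1 + sg * s * X0 + c * Y0 in
  49/100 * Y2 <= Y1 /\ Phi' <= 10 * al * Y2 /\ 14/10 * Y1 <= Y2.
Proof.
  intros Hs Hc Hsg HY HY' HP HX HP' Y2.
  assert (HX' : Rabs X0 <= 30 * al * Y1) by lra.
  assert (Ha2 : al * al <= 1/10000) by nra.
  pose proof (Rabs_pos s). pose proof (Rabs_pos X0).
  assert (Hsx : Rabs (sg * s * X0) <= 60 * (al * al) * Y1).
  { rewrite !Rabs_mult, Hsg, Rmult_1_l.
    apply Rle_trans with (2 * al * (30 * al * Y1)); [apply Rmult_le_compat|]; nra. }
  assert (Hcx : Rabs ((c - 1) * sg * X0) <= 2 * (al * al) * (30 * al * Y1)).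
  { rewrite !Rabs_mult, Hsg, Rmult_1_r. pose proof (Rabs_pos (c - 1)).
    apply Rmult_le_compat; auto. unfold Rabs; destruct Rcase_abs; lra. }
  assert (Hsy : Rabs (s * Y0) <= 2 * al * Y0).
  { rewrite Rabs_mult, (Rabs_right Y0) by lra. apply Rmult_le_compat_r; lra. }
  assert (Hf : Rabs ((c - 1) * sg * X0 - s * Y0) <= 60 * (al * al) * al * Y1 + 2 * al * Y0).
  { replace ((c - 1) * sg * X0 - s * Y0) with ((c - 1) * sg * X0 + - (s * Y0)) by ring.
    eapply Rle_trans; [apply Rabs_triang|]. rewrite Rabs_Ropp. lra. }
  assert (Hl : - (60 * (al * al) * Y1) <= sg * s * X0 <= 60 * (al * al) * Y1).
  { unfold Rabs in Hsx; destruct Rcase_abs in Hsx; lra. }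
  assert (HcY : (1 - 2 * (al * al)) * Y0 <= c * Y0 <= Y0) by nra.
  unfold Y2. split; [nra|split; [|nra]].
  assert (al * al * Y1 <= 1/10000 * Y1) by nra.
  assert (al * (al * al * Y1) <= al * (1/10000 * Y1)) by nra.
  nra.
Qed.

Definition endpoint_invariant (n : nat) : Prop :=
  1 <= endy i al (S n) /\
  49/100 * endy i al (S (S n)) <= endy i al (S n) <= endy i al (S (S n)) /\
  cycle_norm (Nat.even i) (S (S n) mod 6) (endx i al (S (S n))) (endx i al (S n))
    <= 10 * al * endy i al (S (S n)).

Lemma endpoint_invariant_0 : endpoint_invariant 0.
Proof.
  destruct sin_cos_small as [[Hs1 Hs2] Hc0].
  destruct (verts_1 i al Hs1 Hc0) as [_ [HX1 HY1]].
  destruct (endpt_SS_coords i al 0) as [EX EY].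
  assert (X0 : endx i al 0 = 0) by (unfold endx; rewrite endpt_0; reflexivity).
  assert (Y0 : endy i al 0 = 1) by (unfold endy; rewrite endpt_0; reflexivity).
  rewrite X0, Y0 in EX, EY.
  destruct (turn_trig_small 1) as [Hs Hc].
  set (c := cos (al * turns i 1)) in *. set (s := sin (al * turns i 1)) in *.
  assert (EY' : endy i al 2 = endy i al 1 + c) by (rewrite EY; ring).
  assert (EX' : endx i al 2 = endx i al 1 - s) by (rewrite EX; ring).
  assert (Ha2 : al * al <= 1/10000) by nra.
  split; [lra|split; [lra|]].
  eapply Rle_trans; [apply cycle_norm_le; simpl; lia|].
  assert (Rabs (endx i al 1) <= al * endy i al 1) by (rewrite Rabs_right by lra; nra).
  assert (Rabs (endx i al 2) <= al * endy i al 1 + 2 * al).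
  { rewrite EX'. unfold Rminus. eapply Rle_trans; [apply Rabs_triang|]. rewrite Rabs_Ropp. lra. }
  apply Rmax_case_strong; nra.
Qed.

Lemma endpoint_invariant_S n : endpoint_invariant n ->
  endpoint_invariant (S n) /\ 14/10 * endy i al (S (S n)) <= endy i al (S (S (S n))).
Proof.
  intros [HY1 [HY2 HN]].
  destruct (endpt_SS_coords i al (S n)) as [EX EY].
  destruct (fibw_periodic i (S (S n)) Hi) as [_ EP]. fold (even_len i (S (S n))) in EP.
  set (r := (S (S n) mod 6)%nat) in *.
  assert (Hr : (r < 6)%nat) by (apply Nat.mod_upper_bound; lia).
  destruct (turn_trig_small (S (S n))) as [Hs Hc].
  set (c := cos (al * turns i (S (S n)))) in *. set (s := sin (al * turns i (S (S n)))) in *.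
  set (sg := sign (even_len i (S (S n)))) in *.
  set (f := (c - 1) * sg * endx i al (S n) - s * endy i al (S n)) in *.
  assert (HS : cycle_norm (Nat.even i) (S (S (S n)) mod 6)
                 (endx i al (S (S (S n)))) (endx i al (S (S n)))
               <= cycle_norm (Nat.even i) r (endx i al (S (S n))) (endx i al (S n)) + 2 * Rabs f).
  { replace (S (S (S n)) mod 6)%nat with (S r mod 6)%nat
      by (unfold r; rewrite <- Nat.add_1_r, <- (Nat.add_1_r (S (S n))); apply Nat.Div0.add_mod_idemp_l).
    rewrite <- (cycle_norm_step (Nat.even i) r _ (endx i al (S n)) Hr), EX, <- EP.
    apply cycle_norm_perturb. }
  destruct (Rabs_le_cycle_norm (Nat.even i) r (endx i al (S (S n))) (endx i al (S n)) Hr) as [_ HX0].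
  destruct (recursion_estimate c s sg (endx i al (S n)) (endy i al (S n)) (endy i al (S (S n)))
     _ _ Hs Hc (Rabs_sign _) (conj HY1 (proj2 HY2)) (proj1 HY2) HN HX0 HS) as [R1 [R2 R3]].
  rewrite <- EY in R1, R2, R3.
  repeat split; lra.
Qed.

Lemma endpoint_invariant_all n : endpoint_invariant n.
Proof.
  induction n as [|n IH]; [exact endpoint_invariant_0|exact (proj1 (endpoint_invariant_S n IH))].
Qed.

Lemma endy_growth n : 14/10 * endy i al (S (S n)) <= endy i al (S (S (S n))).
Proof. exact (proj2 (endpoint_invariant_S n (endpoint_invariant_all n))). Qed.

Lemma endy_le_SS m : 1 <= endy i al (S m) <= endy i al (S (S m)).
Proof. destruct (endpoint_invariant_all m) as [H1 [[_ H2] _]]. lra. Qed.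

Lemma endx_small m : (1 <= m)%nat ->
  Rabs (endx i al m) <= 30 * al * endy i al m /\ 1 <= endy i al m.
Proof.
  intros Hm. destruct m as [|[|n]]; [lia| |].
  - destruct sin_cos_small as [[Hs1 Hs2] Hc0].
    destruct (verts_1 i al Hs1 Hc0) as [_ [HX1 HY1]].
    rewrite Rabs_right by lra. split; nra.
  - destruct (endpoint_invariant_all n) as [H1 [[H2 H3] H4]].
    assert (Hr : ((S (S n)) mod 6 < 6)%nat) by (apply Nat.mod_upper_bound; lia).
    destruct (Rabs_le_cycle_norm (Nat.even i) _ (endx i al (S (S n))) (endx i al (S n)) Hr) as [HX _].
    split; lra.
Qed.

Lemma endy_ge m : 2/5 * INR m <= endy i al m.
Proof.
  destruct m as [|[|n]].
  - unfold endy. rewrite endpt_0. simpl. lra.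
  - destruct (endx_small 1 ltac:(lia)) as [_ H]. simpl. lra.
  - induction n as [|n IH].
    + destruct (endx_small 2 ltac:(lia)) as [_ H]. simpl. lra.
    + pose proof (endy_growth n). pose proof (endy_le_SS n).
      rewrite S_INR. nra.
Qed.

Lemma near_chord_1 : near_chord i al 1 (2 * al * endy i al 1).
Proof.
  destruct sin_cos_small as [[Hs1 Hs2] Hc0].
  destruct (verts_1 i al Hs1 Hc0) as [Hv [HX1 HY1]].
  intros [u v] Hq. destruct (Hv _ Hq) as [Hu HvY]. simpl in Hu, HvY.
  destruct (endpt i al 1) as [X Y] eqn:E. unfold endx, endy in *. rewrite E in *. simpl in *.
  destruct (chord_point_close X Y u v) as [t [Ht Hd]]; [lra|lra|].
  exists t. split; [exact Ht|].
  rewrite (Rabs_right u), (Rabs_right X) in Hd by lra. nra.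
Qed.

Lemma near_chord_all n :
  near_chord i al (S n) (300 * al * endy i al (S n)) /\
  near_chord i al (S (S n)) (300 * al * endy i al (S (S n))).
Proof.
  induction n as [|n [IH1 IH2]].
  - pose proof near_chord_1 as H1. pose proof (endy_le_SS 0) as HY.
    destruct (endx_small 1 ltac:(lia)) as [HX1 _].
    destruct (endx_small 2 ltac:(lia)) as [HX2 _].
    split; [eapply near_chord_weaken; [|exact H1]; nra|].
    eapply near_chord_weaken; [|apply near_chord_SS; [lra|apply near_chord_0|exact H1]].
    apply Rmax_case_strong; nra.
  - split; [exact IH2|].
    pose proof (endy_le_SS n) as HY. pose proof (endy_growth n) as HG.
    destruct (endx_small (S (S n)) ltac:(lia)) as [HX1 _].
    destruct (endx_small (S (S (S n))) ltac:(lia)) as [HX2 _].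
    eapply near_chord_weaken; [|apply near_chord_SS; [lra|exact IH1|exact IH2]].
    apply Rmax_case_strong; nra.
Qed.

Lemma normalized_curve_close n :
  hclose (dilate (sqrt 2 / width al (fibw i (S n))) (curve al (fibw i (S n)))) fractal0
    (4 / endy i al (S n) + 1200 * al).
Proof.
  destruct (endx_small (S n) ltac:(lia)) as [HX HY].
  pose proof (proj1 (near_chord_all n)) as Hnear.
  unfold near_chord, endx, endy, endpt, verts in *. unfold width.
  destruct (last (vertices al (fibw i (S n))) (0,0)) as [X Y] eqn:E. simpl in *.
  pose proof (hclose_curve_segment al _ X Y _ (fibw_neq_nil i (S n) Hi) ltac:(lra) E Hnear) as H1.
  pose proof (hclose_dilate_segment X Y ltac:(lra)) as H2. simpl in H2.
  set (c := sqrt 2 / dist2 (0,0) (X, Y)) in *.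
  assert (Hc : 0 <= c <= 3 / (2 * Y)).
  { pose proof (snd_le_dist2_origin X Y ltac:(lra)). pose proof Rlt_sqrt2_0.
    assert (sqrt 2 <= 3/2) by (rewrite <- (sqrt_square (3/2)) by lra; apply sqrt_le_1_alt; lra).
    unfold c. split; [apply Rle_mult_inv_pos; lra|].
    apply Rmult_le_reg_r with (2 * Y * dist2 (0,0) (X, Y)); [nra|].
    unfold Rdiv. field_simplify; [nra|lra|lra]. }
  apply (hclose_weaken _ _ (c * ((1 + 300 * al * Y) * (2 + Rabs X / Y)) + 2 * c * Rabs X)).
  2: { eapply hclose_trans; [apply hclose_dilate; [lra|exact H1]|exact H2]. }
  assert (Ha : Rabs X / Y <= 3/10).
  { apply Rmult_le_reg_r with Y; [lra|]. unfold Rdiv. rewrite Rmult_assoc, Rinv_l by lra. nra. }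
  pose proof (Rabs_pos X). assert (0 <= Rabs X / Y) by (apply Rle_mult_inv_pos; lra).
  assert (c * ((1 + 300 * al * Y) * (2 + Rabs X / Y)) <= 3 / (2 * Y) * ((1 + 300 * al * Y) * (23/10))).
  { apply Rmult_le_compat; try nra. }
  assert (2 * c * Rabs X <= 2 * (3 / (2 * Y)) * (30 * al * Y)) by (apply Rmult_le_compat; nra).
  assert (3 / (2 * Y) * ((1 + 300 * al * Y) * (23/10)) = 69 / (20 * Y) + 1035 * al) by (field; lra).
  assert (2 * (3 / (2 * Y)) * (30 * al * Y) = 90 * al) by (field; lra).
  assert (69 / (20 * Y) <= 4 / Y).
  { apply Rmult_le_reg_r with (20 * Y); [lra|]. field_simplify; lra. }
  lra.
Qed.

Lemma normalized_curve_eventually_close e : 0 < e ->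
  exists k0, forall k, (k0 <= k)%nat -> hclose (normalized_curve i al k) fractal0 (e + 1200 * al).
Proof.
  intros He. destruct (INR_unbounded (10 / e)) as [N HN]. exists N. intros k Hk.
  assert (Hm : (6 * k + 3 <= m_index i k)%nat) by (unfold m_index; destruct (Nat.even i); lia).
  set (n := (m_index i k - 2)%nat).
  assert (Hw : fib_word i (m_index i k) = fibw i (S n))
    by (unfold fib_word, fibw, n; do 3 f_equal; lia).
  unfold normalized_curve. rewrite Hw.
  eapply hclose_weaken; [|apply normalized_curve_close].
  assert (HnN : INR N <= INR (S n)) by (apply le_INR; unfold n; lia).
  pose proof (endy_ge (S n)) as HY.
  assert (10 / e * e = 10) by (field; lra).
  assert (4 <= e * endy i al (S n)) by nra.
  assert (4 / endy i al (S n) <= e).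
  { apply Rmult_le_reg_r with (endy i al (S n)); [nra|]. field_simplify; nra. }
  lra.
Qed.

End SmallAngle.

Theorem theorem5p11 (i : nat) (Hi : (2 <= i)%nat) (F : R -> pt -> Prop)
  (HF : forall alpha, 0 < alpha <= PI / 2 ->
        nonempty_set (F alpha) /\ compact_set (F alpha) /\
        hausdorff_limit (normalized_curve i alpha) (F alpha)) :
  forall e, 0 < e -> exists d, 0 < d /\
    forall alpha, 0 < alpha < d -> alpha <= PI / 2 ->
      hclose (F alpha) fractal0 e.
Proof.
  intros e He. exists (Rmin (1/100) (e / 4800)). split; [apply Rmin_pos; lra|].
  intros al [Hal0 Hald] Halpi.
  pose proof (Rmin_l (1/100) (e / 4800)). pose proof (Rmin_r (1/100) (e / 4800)).
  destruct (HF al (conj Hal0 Halpi)) as [_ [_ Hlim]].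
  destruct (Hlim (e / 2) ltac:(lra)) as [k1 Hk1].
  destruct (normalized_curve_eventually_close i al Hi ltac:(lra) (e / 4) ltac:(lra)) as [k2 Hk2].
  apply (hclose_weaken _ _ (e / 2 + (e / 4 + 1200 * al))); [lra|].
  apply (hclose_trans _ (normalized_curve i al (k1 + k2))).
  - apply hclose_sym, Hk1. lia.
  - apply Hk2. lia.
Qed.
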